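(* The state $h$ on $U_n^{nc}$ defined below is tracial, and $h\star_T\phi=h$ for every tracial state $\phi$ on $U_n^{nc}$. Consequently $h$ is the Haar trace on $U\langle n\rangle$ for the tensor convolution.
   Context: $U_n^{nc}$ is the universal unital $*$-algebra generated by $u_{ij}$ ($1\le i,j\le n$) with $\sum_ku_{ki}^*u_{kj}=\delta_{ij}=\sum_ku_{ik}u_{jk}^*$, with $\Delta(u_{ij})=\sum_ku_{ik}^{(1)}u_{kj}^{(2)}$ into the free product $U_n^{nc}\sqcup U_n^{nc}$, $\delta(u_{ij})=\delta_{ij}$. Tensor convolution: $\phi\star_T\psi=(\phi\otimes\psi)\circ\Delta$, where $\phi\otimes\psi$ is the unital functional on $U_n^{nc}\sqcup U_n^{nc}$ such that for $A_i\in\ker\delta$ in factor $\epsilon_i\in\{1,2\}$, $\epsilon_i\ne\epsilon_{i+1}$, $(\phi\otimes\psi)(A_1\cdots A_m)=\phi(\prod_{\epsilon_i=1}A_i)\psi(\prod_{\epsilon_i=2}A_i)$ (ordered products); equivalently $\phi\star_T\psi(u^{\epsilon_1}_{i_1j_1}\cdots u^{\epsilon_r}_{i_rj_r})=\sum_{k_1,\dots,k_r}\phi(u^{\epsilon_1}_{i_1k_1}\cdots u^{\epsilon_r}_{i_rk_r})\psi(u^{\epsilon_1}_{k_1j_1}\cdots u^{\epsilon_r}_{k_rj_r})$. A state is tracial if $\phi(ab)=\phi(ba)$; the tensor Haar trace is a tracial state $h$ with $\phi\star_Th=h=h\star_T\phi$ for all tracial $\phi$. Definition of $h$: let $H=\ell^2(\mathbb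 Z)\otimes\bigotimes_{k\in\mathbb Z}M_n(\mathbb C)$ ($M_n(\mathbb C)$ with inner product $\mathrm{Tr}(A^*B)/n$, infinite tensor product with reference vector $I_n$); $U_{ij}(\delta_k\otimes(\cdots\otimes M_k\otimes\cdots))=\delta_{k+1}\otimes(\cdots\otimes E_{ji}M_k\otimes\cdots)$ (factor at position $k$ multiplied), $U_{ij}^*(\delta_k\otimes(\cdots\otimes M_{k-1}\otimes\cdots))=\delta_{k-1}\otimes(\cdots\otimes E_{ij}M_{k-1}\otimes\cdots)$; $j(u_{ij})=U_{ij}$ extends to a unital $*$-homomorphism $U_n^{nc}\to B(H)$; $h(a)=\langle\Omega,j(a)\Omega\rangle$ with $\Omega=\delta_0\otimes\bigotimes_kI_n$. *)

From Stdlib Require Import Reals ZArith List Arith Bool.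
Import ListNotations.
Open Scope R_scope.

Definition C := (R * R)%type.
Definition Cadd (x y : C) : C := (fst x + fst y, snd x + snd y).
Definition Cmul (x y : C) : C :=
  (fst x * fst y - snd x * snd y, fst x * snd y + snd x * fst y).
Definition Cconj (x : C) : C := (fst x, - snd x).
Definition C0 : C := (0, 0).
Definition C1 : C := (1, 0).
Definition RtoC (r : R) : C := (r, 0).
Definition Csum (l : list C) : C := fold_right Cadd C0 l.
Definition Csum_n (n : nat) (f : nat -> C) : C := Csum (map f (seq 0 n)).
Definition delta (i j : nat) : C := if Nat.eqb i j then C1 else C0.

(* mkgen false i j = u_ij ,  mkgen true i j = u_ij^*  (indices 0..n-1) *)
Record gen := mkgen { st : bool; gi : nat; gj : nat }.
Definition u (i j : nat) : gen := mkgen false i j.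
Definition us (i j : nat) : gen := mkgen true i j.
Definition word := list gen.
Definition valid (n : nat) (w : word) : Prop :=
  Forall (fun g => (gi g < n)%nat /\ (gj g < n)%nat) w.
Definition adj (w : word) : word :=
  rev (map (fun g => mkgen (negb (st g)) (gi g) (gj g)) w).

(* A linear functional on U_n^nc is given by its values on monomials
   (the monomials span U_n^nc). *)
Definition functional := word -> C.

(* phi vanishes on the two-sided ideal generated by the defining relations
   sum_k u_ki^* u_kj - delta_ij  and  sum_k u_ik u_jk^* - delta_ij,
   i.e. phi factors through U_n^nc. *)
Definition respects_relations (n : nat) (phi : functional) : Prop :=
  forall (a b : word) (i j : nat), valid n a -> valid n b -> (i < n)%nat -> (j < n)%nat ->
    Csum_n n (fun k => phi (a ++ [us k i; u k j] ++ b)) = Cmul (delta i j) (phi (a ++ b)) /\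
    Csum_n n (fun k => phi (a ++ [u i k; us j k] ++ b)) = Cmul (delta i j) (phi (a ++ b)).

(* positivity: phi(x^* x) >= 0 for x = sum_p c_p w_p *)
Definition positive (n : nat) (phi : functional) : Prop :=
  forall l : list (C * word), Forall (fun p => valid n (snd p)) l ->
    let s := Csum (flat_map (fun p => map (fun q =>
               Cmul (Cmul (Cconj (fst p)) (fst q)) (phi (adj (snd p) ++ snd q))) l) l) in
    snd s = 0 /\ 0 <= fst s.

Definition is_state (n : nat) (phi : functional) : Prop :=
  phi [] = C1 /\ respects_relations n phi /\ positive n phi.

Definition tracial (n : nat) (phi : functional) : Prop :=
  forall v w, valid n v -> valid n w -> phi (v ++ w) = phi (w ++ v).

Definition feq (n : nat) (phi psi : functional) : Prop :=
  forall w, valid n w -> phi w = psi w.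

Fixpoint ktuples (n r : nat) : list (list nat) :=
  match r with
  | O => [[]]
  | S r' => flat_map (fun k => map (cons k) (ktuples n r')) (seq 0 n)
  end.
Definition left_word (w : word) (ks : list nat) : word :=
  map (fun p => mkgen (st (fst p)) (gi (fst p)) (snd p)) (combine w ks).
Definition right_word (w : word) (ks : list nat) : word :=
  map (fun p => mkgen (st (fst p)) (snd p) (gj (fst p))) (combine w ks).
(* (phi *_T psi)(u^{e1}_{i1 j1} ... u^{er}_{ir jr})
     = sum_{k} phi(u^{e1}_{i1 k1} ...) psi(u^{e1}_{k1 j1} ...) *)
Definition conv (n : nat) (phi psi : functional) : functional := fun w =>
  Csum (map (fun ks => Cmul (phi (left_word w ks)) (psi (right_word w ks)))
            (ktuples n (length w))).

(* matrices in M_n(R) as entry functions (entries outside 0..n-1 unused) *)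
Definition mat := nat -> nat -> R.
Definition Iden : mat := fun a b => if Nat.eqb a b then 1 else 0.
(* Emul p q M = E_pq M *)
Definition Emul (p q : nat) (M : mat) : mat :=
  fun a b => if Nat.eqb a p then M q b else 0.
Definition mtrace (n : nat) (M : mat) : R := fold_right Rplus 0 (map (fun a => M a a) (seq 0 n)).
(* elementary tensor delta_k (x) (x)_q F q  in  l^2(Z) (x) (x)_{q in Z} M_n *)
Definition hvec := (Z * (Z -> mat))%type.
Definition upd (F : Z -> mat) (k : Z) (M : mat) : Z -> mat :=
  fun q => if Z.eqb q k then M else F q.
(* U_ij : delta_k (x) (.. M_k ..) |-> delta_{k+1} (x) (.. E_ji M_k ..)
   U_ij^*: delta_k (x) (.. M_{k-1} ..) |-> delta_{k-1} (x) (.. E_ij M_{k-1} ..) *)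
Definition step (g : gen) (s : hvec) : hvec :=
  let (k, F) := s in
  if st g then ((k - 1)%Z, upd F (k - 1)%Z (Emul (gi g) (gj g) (F (k - 1)%Z)))
  else ((k + 1)%Z, upd F k (Emul (gj g) (gi g) (F k))).
Definition Omega : hvec := (0%Z, fun _ => Iden).
(* j(w) Omega ; the rightmost letter acts first *)
Definition act (w : word) : hvec := fold_right step Omega w.
(* h(w) = < Omega, j(w) Omega >.  Only positions in [-|w|, |w|] can differ
   from I_n, and <I_n, M> = Tr(M)/n, so the infinite product of the factor
   inner products reduces to the finite product below. *)
Definition haar (n : nat) : functional := fun w =>
  let (k, F) := act w in
  let L := length w in
  if Z.eqb k 0 then
    RtoC (fold_right Rmult 1
      (map (fun t => mtrace n (F (Z.of_nat t - Z.of_nat L)%Z) / INR n) (seq 0 (2 * L + 1))))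
  else C0.

(** The operator [j(w)] moves the [l^2(Z)] index one step per letter and multiplies the
    tensor factor at the current position by a matrix unit. Hence [h(w)] vanishes unless [w]
    is balanced, and is then the product, over all positions [x], of the normalised traces of
    the products of matrix units that land at [x]. Rotating a word only translates these
    columns and traces are cyclic, so [h] is tracial; [h(v^* w)] is a positive multiple of a
    Gram matrix of real vectors, so [h] is positive.

    For [h *_T phi = h] we induct on the number of generators. A balanced word can be rotated
    (using that [h] and [phi] are both tracial) so that some [u_ab^*] is followed by a [u_cd]
    with only already merged letters in between. In [h] both act on the same position and
    leave [E_ab E_dc = delta_bd E_ac] there, so the pair can be replaced by a single letter;
    on the [phi] side, summing over the intermediate index gives [delta_bd] by the relation
    [u^* u = 1]. Right invariance then follows from left invariance by the anti-automorphism
    [u_ij |-> u_ji], which preserves [h], the relations and traciality, and exchanges the two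
    factors of the convolution. *)

From Stdlib Require Import Reals ZArith List Bool Lia Lra FunctionalExtensionality.
Import ListNotations.
Open Scope R_scope.

Lemma Cext (x y : C) : fst x = fst y -> snd x = snd y -> x = y.
Proof. destruct x, y; simpl; intros -> ->; reflexivity. Qed.

Ltac Cring := repeat match goal with p : C |- _ => destruct p end;
  unfold Cmul, Cadd, Cconj, C0, C1, RtoC in *; simpl in *; apply Cext; simpl; ring.

Lemma Cmul_comm (x y : C) : Cmul x y = Cmul y x.
Proof. Cring. Qed.

Lemma Cadd_C0_r (x : C) : Cadd x C0 = x.
Proof. Cring. Qed.

Lemma Csum_app l1 l2 : Csum (l1 ++ l2) = Cadd (Csum l1) (Csum l2).
Proof. induction l1; simpl; [Cring|]. rewrite IHl1; Cring. Qed.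

Lemma Csum_map_ext {A} (f g : A -> C) l :
  (forall x, In x l -> f x = g x) -> Csum (map f l) = Csum (map g l).
Proof. intros H; f_equal; apply map_ext_in, H. Qed.

Lemma Csum_map_add {A} (f g : A -> C) l :
  Csum (map (fun x => Cadd (f x) (g x)) l) = Cadd (Csum (map f l)) (Csum (map g l)).
Proof. induction l; simpl; [Cring|]. rewrite IHl; Cring. Qed.

Lemma Csum_map_mull {A} (f : A -> C) c l :
  Csum (map (fun x => Cmul c (f x)) l) = Cmul c (Csum (map f l)).
Proof. induction l; simpl; [Cring|]. rewrite IHl; Cring. Qed.

Lemma Csum_map_C0 {A} (l : list A) : Csum (map (fun _ => C0) l) = C0.
Proof. induction l; simpl; auto. rewrite IHl; Cring. Qed.

Lemma Csum_flat_map {A B} (f : B -> C) (g : A -> list B) l :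
  Csum (map f (flat_map g l)) = Csum (map (fun x => Csum (map f (g x))) l).
Proof. induction l; simpl; auto. rewrite map_app, Csum_app, IHl; auto. Qed.

Lemma Csum_swap {A B} (f : A -> B -> C) l1 l2 :
  Csum (map (fun x => Csum (map (fun y => f x y) l2)) l1) =
  Csum (map (fun y => Csum (map (fun x => f x y) l1)) l2).
Proof.
  induction l1; simpl; [now rewrite Csum_map_C0|].
  rewrite IHl1, <- Csum_map_add; auto.
Qed.

Definition Rsum (l : list R) : R := fold_right Rplus 0 l.

Lemma Csum_RtoC {A} (f : A -> R) l :
  Csum (map (fun x => RtoC (f x)) l) = RtoC (Rsum (map f l)).
Proof. induction l; simpl; auto. rewrite IHl; Cring. Qed.

Lemma fst_Csum l : fst (Csum l) = Rsum (map fst l).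
Proof. induction l; simpl; auto. rewrite IHl; auto. Qed.

Lemma snd_Csum l : snd (Csum l) = Rsum (map snd l).
Proof. induction l; simpl; auto. rewrite IHl; auto. Qed.

Lemma Rsum_ext {A} (f g : A -> R) l :
  (forall x, In x l -> f x = g x) -> Rsum (map f l) = Rsum (map g l).
Proof. intros H; f_equal; apply map_ext_in, H. Qed.

Lemma Rsum_app l1 l2 : Rsum (l1 ++ l2) = Rsum l1 + Rsum l2.
Proof. induction l1; simpl; [ring|]. rewrite IHl1; ring. Qed.

Lemma Rsum_const {A} c (l : list A) : Rsum (map (fun _ => c) l) = INR (length l) * c.
Proof. induction l; simpl; [ring|]. rewrite IHl; destruct (length l); simpl; ring. Qed.

Lemma Rsum_mull {A} (f : A -> R) c l : Rsum (map (fun x => c * f x) l) = c * Rsum (map f l).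
Proof. induction l; simpl; [ring|]. rewrite IHl; ring. Qed.

Lemma Rsum_add {A} (f g : A -> R) l :
  Rsum (map (fun x => f x + g x) l) = Rsum (map f l) + Rsum (map g l).
Proof. induction l; simpl; [ring|]. rewrite IHl; ring. Qed.

Lemma Rsum_swap {A B} (f : A -> B -> R) l1 l2 :
  Rsum (map (fun x => Rsum (map (fun y => f x y) l2)) l1) =
  Rsum (map (fun y => Rsum (map (fun x => f x y) l1)) l2).
Proof.
  induction l1; simpl.
  - rewrite (Rsum_const 0), Rmult_0_r; reflexivity.
  - rewrite IHl1, <- Rsum_add; auto.
Qed.

Lemma Rsum_flat_map {A B} (f : B -> R) (g : A -> list B) l :
  Rsum (map f (flat_map g l)) = Rsum (map (fun x => Rsum (map f (g x))) l).
Proof. induction l; simpl; auto. rewrite map_app, Rsum_app, IHl; auto. Qed.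

Lemma Rsum_prod {A B} (f : A -> R) (g : B -> R) l1 l2 :
  Rsum (map f l1) * Rsum (map g l2) = Rsum (map (fun a => Rsum (map (fun b => f a * g b) l2)) l1).
Proof.
  induction l1; simpl; [ring|].
  rewrite <- IHl1, Rsum_mull; ring.
Qed.

Lemma Rsum_nonneg {A} (f : A -> R) l : (forall x, 0 <= f x) -> 0 <= Rsum (map f l).
Proof. intros H; induction l; simpl; [lra|]. pose proof (H a); lra. Qed.

Lemma seq_split_at r m : (r < m)%nat -> seq 0 m = seq 0 r ++ r :: seq (S r) (m - S r).
Proof.
  intros Hr. replace m with (r + S (m - S r))%nat at 1 by lia.
  rewrite seq_app; reflexivity.
Qed.

Lemma Rsum_delta (g : nat -> R) r m : (r < m)%nat ->
  Rsum (map (fun k => if Nat.eqb k r then g k else 0) (seq 0 m)) = g r.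
Proof.
  intros Hr. rewrite (seq_split_at r m Hr), map_app, Rsum_app; simpl.
  rewrite Nat.eqb_refl, (Rsum_ext _ (fun _ => 0)), (Rsum_ext _ (fun _ => 0) (seq (S r) _)),
    !Rsum_const; [ring| |]; intros k Hk; apply in_seq in Hk;
    destruct (Nat.eqb_spec k r); auto; lia.
Qed.

Lemma Csum_single (f : nat -> C) r m : (r < m)%nat -> (forall k, k <> r -> f k = C0) ->
  Csum (map f (seq 0 m)) = f r.
Proof.
  intros Hr Hf. rewrite (seq_split_at r m Hr), map_app, Csum_app; simpl.
  rewrite (Csum_map_ext _ (fun _ => C0)), (Csum_map_ext _ (fun _ => C0) (seq (S r) _)),
    !Csum_map_C0; [Cring| |]; intros k Hk; apply in_seq in Hk; apply Hf; lia.
Qed.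

Fixpoint zprod (f : Z -> R) (lo : Z) (m : nat) : R :=
  match m with O => 1 | S m' => f lo * zprod f (lo + 1)%Z m' end.

Lemma zprod_app f a b lo :
  zprod f lo (a + b) = zprod f lo a * zprod f (lo + Z.of_nat a)%Z b.
Proof.
  revert lo; induction a; intros; simpl.
  - rewrite Z.add_0_r; ring.
  - rewrite IHa. replace (lo + 1 + Z.of_nat a)%Z with (lo + Z.pos (Pos.of_succ_nat a))%Z by lia.
    ring.
Qed.

Lemma zprod_ext f g m lo :
  (forall x, (lo <= x < lo + Z.of_nat m)%Z -> f x = g x) -> zprod f lo m = zprod g lo m.
Proof.
  revert lo; induction m; intros lo H; simpl; auto.
  rewrite H by lia. rewrite (IHm (lo + 1)%Z); auto; intros; apply H; lia.
Qed.

Lemma zprod_one f m lo :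
  (forall x, (lo <= x < lo + Z.of_nat m)%Z -> f x = 1) -> zprod f lo m = 1.
Proof.
  revert lo; induction m; intros lo H; simpl; auto.
  rewrite H by lia. rewrite IHm by (intros; apply H; lia); ring.
Qed.

Lemma zprod_zero f m lo x :
  (lo <= x < lo + Z.of_nat m)%Z -> f x = 0 -> zprod f lo m = 0.
Proof.
  revert lo; induction m; intros lo Hx Hf; simpl; [lia|].
  destruct (Z.eq_dec x lo) as [<-|]; [rewrite Hf; ring|].
  rewrite (IHm (lo + 1)%Z); [ring|lia|auto].
Qed.

Lemma zprod_mult f g m lo :
  zprod (fun x => f x * g x) lo m = zprod f lo m * zprod g lo m.
Proof. revert lo; induction m; intros; simpl; [ring|]. rewrite IHm; ring. Qed.

Lemma zprod_shift f c m lo : zprod (fun x => f (x + c)%Z) lo m = zprod f (lo + c)%Z m.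
Proof.
  revert lo; induction m; intros; simpl; auto.
  rewrite IHm. replace (lo + 1 + c)%Z with (lo + c + 1)%Z by lia; auto.
Qed.

Lemma zprod_reflect f c m lo :
  zprod (fun x => f (c - x)%Z) lo m = zprod f (c - lo - Z.of_nat m + 1)%Z m.
Proof.
  revert lo; induction m; intros; [reflexivity|].
  change (zprod (fun x => f (c - x)%Z) lo (S m))
    with (f (c - lo)%Z * zprod (fun x => f (c - x)%Z) (lo + 1) m).
  rewrite IHm. replace (S m) with (m + 1)%nat at 2 by lia. rewrite zprod_app; cbn [zprod].
  replace (c - (lo + 1) - Z.of_nat m + 1)%Z with (c - lo - Z.of_nat (m + 1) + 1)%Z by lia.
  replace (c - lo - Z.of_nat (S m) + 1 + Z.of_nat m)%Z with (c - lo)%Z by lia.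
  rewrite Nat.add_1_r; ring.
Qed.

Lemma zprod_split f m lo x0 :
  (lo <= x0 < lo + Z.of_nat m)%Z ->
  zprod f lo m = zprod f lo (Z.to_nat (x0 - lo)) * f x0 *
                 zprod f (x0 + 1)%Z (m - Z.to_nat (x0 - lo) - 1).
Proof.
  intros. replace m with (Z.to_nat (x0 - lo) + (1 + (m - Z.to_nat (x0 - lo) - 1)))%nat at 1
    by lia.
  rewrite zprod_app, zprod_app; simpl.
  replace (lo + Z.of_nat (Z.to_nat (x0 - lo)))%Z with x0 by lia.
  replace (x0 + Z.of_nat 1)%Z with (x0 + 1)%Z by lia. ring.
Qed.

Lemma Rsum_zprod_single {A} (l : list A) (F : A -> Z -> R) (g : Z -> R) x0 lo m :
  (lo <= x0 < lo + Z.of_nat m)%Z -> (forall k x, x <> x0 -> F k x = g x) ->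
  Rsum (map (fun k => zprod (F k) lo m) l) =
  zprod (fun x => if Z.eqb x x0 then Rsum (map (fun k => F k x) l) else g x) lo m.
Proof.
  intros Hx0 HF.
  set (G := fun x => if Z.eqb x x0 then Rsum (map (fun k => F k x) l) else g x).
  assert (Hg : forall h, (forall x, x <> x0 -> h x = g x) ->
     zprod h lo m = zprod g lo (Z.to_nat (x0 - lo)) * h x0 *
                    zprod g (x0 + 1) (m - Z.to_nat (x0 - lo) - 1)).
  { intros h Hh. rewrite (zprod_split h m lo x0 Hx0).
    rewrite (zprod_ext h g (Z.to_nat _)), (zprod_ext h g (_ - _ - _)%nat);
      auto; intros x Hx; apply Hh; lia. }
  rewrite (Rsum_ext _ (fun k => zprod g lo (Z.to_nat (x0 - lo)) *
                               zprod g (x0 + 1) (m - Z.to_nat (x0 - lo) - 1) * F k x0))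
    by (intros k _; rewrite (Hg (F k)) by auto; ring).
  rewrite (Hg G) by (intros x Hx; unfold G; rewrite (proj2 (Z.eqb_neq x x0) Hx); auto).
  unfold G; rewrite Z.eqb_refl, Rsum_mull; ring.
Qed.

Definition supported_in (B : nat) (f : Z -> R) : Prop :=
  forall x, f x <> 1 -> (Z.abs x <= Z.of_nat B)%Z.

Lemma zprod_box f N lo m : supported_in N f ->
  (lo <= - Z.of_nat N)%Z -> (Z.of_nat N < lo + Z.of_nat m)%Z ->
  zprod f lo m = zprod f (- Z.of_nat N)%Z (2 * N + 1).
Proof.
  intros Hf Hlo Hhi.
  set (a := Z.to_nat (- Z.of_nat N - lo)).
  replace m with (a + ((2 * N + 1) + (m - a - (2 * N + 1))))%nat at 1 by lia.
  assert (Hout : forall x, (Z.of_nat N < Z.abs x)%Z -> f x = 1).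
  { intros x Hx. destruct (Req_dec (f x) 1) as [|Hx1]; auto. apply Hf in Hx1; lia. }
  rewrite !zprod_app, (zprod_one f a), (zprod_one f (m - a - _))
    by (intros; apply Hout; lia).
  replace (lo + Z.of_nat a)%Z with (- Z.of_nat N)%Z by lia. ring.
Qed.

Lemma zprod_window f B N N' : supported_in B f -> (B <= N)%nat -> (B <= N')%nat ->
  zprod f (- Z.of_nat N) (2 * N + 1) = zprod f (- Z.of_nat N') (2 * N' + 1).
Proof.
  intros Hf HN HN'.
  rewrite (zprod_box f B (- Z.of_nat N)), (zprod_box f B (- Z.of_nat N')) by (auto; lia).
  reflexivity.
Qed.

Lemma zprod_window_shift f B c N : supported_in B f -> (Z.abs c + Z.of_nat B <= Z.of_nat N)%Z ->
  zprod (fun x => f (x + c)%Z) (- Z.of_nat N) (2 * N + 1) = zprod f (- Z.of_nat N) (2 * N + 1).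
Proof.
  intros Hf HN. rewrite zprod_shift.
  rewrite (zprod_box f B (- Z.of_nat N + c)), (zprod_box f B (- Z.of_nat N)) by (auto; lia).
  reflexivity.
Qed.

Lemma zprod_window_reflect f B c N : supported_in B f -> (Z.abs c + Z.of_nat B <= Z.of_nat N)%Z ->
  zprod (fun x => f (c - x)%Z) (- Z.of_nat N) (2 * N + 1) = zprod f (- Z.of_nat N) (2 * N + 1).
Proof.
  intros Hf HN. rewrite zprod_reflect.
  rewrite (zprod_box f B (c - - Z.of_nat N - _ + 1)), (zprod_box f B (- Z.of_nat N))
    by (auto; lia).
  reflexivity.
Qed.

Lemma fold_Rmult_zprod g c s m :
  fold_right Rmult 1 (map (fun t => g (Z.of_nat t - c)%Z) (seq s m)) =
  zprod g (Z.of_nat s - c)%Z m.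
Proof.
  revert s; induction m; intros; simpl; auto.
  rewrite IHm; do 2 f_equal; lia.
Qed.

Lemma zprod_const_pos c lo m : 0 < c -> 0 < zprod (fun _ => c) lo m.
Proof. revert lo; induction m; intros; simpl; [lra|]. apply Rmult_lt_0_compat; auto. Qed.

Fixpoint tuples {A} (T : list A) (m : nat) : list (list A) :=
  match m with O => [[]] | S m' => flat_map (fun t => map (cons t) (tuples T m')) T end.

Fixpoint zprod_choice {A} (F : Z -> A -> R) (lo : Z) (s : list A) : R :=
  match s with [] => 1 | t :: s' => F lo t * zprod_choice F (lo + 1)%Z s' end.

Lemma zprod_expand {A} (F : Z -> A -> R) T m lo :
  zprod (fun x => Rsum (map (F x) T)) lo m = Rsum (map (zprod_choice F lo) (tuples T m)).
Proof.
  revert lo; induction m; intros; simpl; [ring|].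
  rewrite IHm, Rsum_prod, Rsum_flat_map. apply Rsum_ext. intros t _. rewrite map_map; auto.
Qed.

Lemma zprod_choice_mult {A} (F G : Z -> A -> R) s lo :
  zprod_choice (fun x t => F x t * G x t) lo s = zprod_choice F lo s * zprod_choice G lo s.
Proof. revert lo; induction s; intros; simpl; [ring|]. rewrite IHs; ring. Qed.

(** * Matrix units *)

(** Products of matrix units [E_pq] are [0], [I] or again a matrix unit. *)
Inductive munit := MZero | MOne | MUnit (p q : nat).

Definition mmul (x y : munit) : munit :=
  match x, y with
  | MZero, _ | _, MZero => MZero
  | MOne, _ => y
  | _, MOne => x
  | MUnit p q, MUnit r s => if Nat.eqb q r then MUnit p s else MZero
  end.

Definition mprod (l : list (nat * nat)) : munit :=
  fold_right (fun pq r => mmul (MUnit (fst pq) (snd pq)) r) MOne l.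

Definition mtrans (x : munit) : munit :=
  match x with MUnit p q => MUnit q p | _ => x end.

Ltac natcase :=
  repeat (match goal with
          | |- context [Nat.eqb ?a ?b] => destruct (Nat.eqb_spec a b)
          | |- context [Nat.ltb ?a ?b] => destruct (Nat.ltb_spec a b)
          end; subst; simpl); auto; try lia.

Lemma mmul_1l x : mmul MOne x = x.
Proof. destruct x; reflexivity. Qed.

Lemma mmul_1r x : mmul x MOne = x.
Proof. destruct x; reflexivity. Qed.

Lemma mmul_0r x : mmul x MZero = MZero.
Proof. destruct x; reflexivity. Qed.

Lemma mmul_assoc x y z : mmul x (mmul y z) = mmul (mmul x y) z.
Proof. destruct x, y, z; simpl; natcase. Qed.

Lemma mprod_app l1 l2 : mprod (l1 ++ l2) = mmul (mprod l1) (mprod l2).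
Proof.
  induction l1; [symmetry; apply mmul_1l|]. cbn [app mprod fold_right].
  fold (mprod (l1 ++ l2)) (mprod l1).
  rewrite IHl1, mmul_assoc; reflexivity.
Qed.

Lemma mtrans_mmul x y : mtrans (mmul x y) = mmul (mtrans y) (mtrans x).
Proof. destruct x, y; simpl; natcase. Qed.

Definition swap_pair (pq : nat * nat) : nat * nat := (snd pq, fst pq).

Lemma mprod_rev_swap l : mprod (rev (map swap_pair l)) = mtrans (mprod l).
Proof.
  induction l as [|[p q] l IH]; [reflexivity|]. cbn [map rev].
  rewrite mprod_app, IH. cbn [mprod fold_right]. fold (mprod l).
  rewrite mtrans_mmul, mmul_1r; reflexivity.
Qed.

Definition emuls (l : list (nat * nat)) (M : mat) : mat :=
  fold_right (fun pq M => Emul (fst pq) (snd pq) M) M l.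

Definition munit_mul (x : munit) (M : mat) : mat :=
  match x with MZero => fun _ _ => 0 | MOne => M | MUnit p q => Emul p q M end.

Lemma emuls_app l1 l2 M : emuls (l1 ++ l2) M = emuls l1 (emuls l2 M).
Proof. induction l1; simpl; auto. rewrite IHl1; auto. Qed.

Lemma emuls_mprod l M : emuls l M = munit_mul (mprod l) M.
Proof.
  induction l as [|[p q] l IH]; [reflexivity|]. cbn [emuls mprod fold_right fst snd].
  fold (emuls l M) (mprod l). rewrite IH.
  destruct (mprod l); simpl; auto; extensionality a; extensionality b; unfold Emul;
    natcase; unfold Emul; natcase.
Qed.

Section Trace.
Variable n : nat.

Definition ntr (x : munit) : R :=
  match x with
  | MZero => 0
  | MOne => 1
  | MUnit p q => if Nat.eqb p q && Nat.ltb p n then / INR n else 0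
  end.

Definition munit_valid (x : munit) : Prop :=
  match x with MUnit p q => (p < n /\ q < n)%nat | _ => True end.

Definition pair_valid (pq : nat * nat) : Prop := (fst pq < n /\ snd pq < n)%nat.

Lemma mmul_valid x y : munit_valid x -> munit_valid y -> munit_valid (mmul x y).
Proof. destruct x, y; simpl; auto; natcase; tauto. Qed.

Lemma mprod_valid l : Forall pair_valid l -> munit_valid (mprod l).
Proof.
  induction 1; [exact I|]. cbn [mprod fold_right]. fold (mprod l).
  apply mmul_valid; auto.
Qed.

Lemma ntr_mtrans x : ntr (mtrans x) = ntr x.
Proof. destruct x; simpl; natcase. Qed.

Lemma ntr_mmul_comm x y : munit_valid x -> munit_valid y -> ntr (mmul x y) = ntr (mmul y x).
Proof. destruct x, y; simpl; intros; natcase. Qed.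

Hypothesis Hn : (0 < n)%nat.

Lemma mtrace_munit_mul x : mtrace n (munit_mul x Iden) / INR n = ntr x.
Proof.
  assert (HnR : INR n <> 0) by (apply not_0_INR; lia).
  unfold mtrace; fold (Rsum (map (fun a => munit_mul x Iden a a) (seq 0 n))).
  destruct x as [| |p q]; simpl.
  - rewrite Rsum_const; unfold Rdiv; ring.
  - rewrite (Rsum_ext _ (fun _ => 1)), Rsum_const, length_seq by
      (intros; unfold Iden; rewrite Nat.eqb_refl; auto).
    field; auto.
  - unfold Emul, Iden. destruct (Nat.ltb_spec p n).
    + rewrite (Rsum_delta (fun a => if Nat.eqb q a then 1 else 0)) by auto.
      natcase; field; auto.
    + rewrite (Rsum_ext _ (fun _ => 0)), Rsum_const, andb_false_r by
        (intros a Ha; apply in_seq in Ha; natcase).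
      unfold Rdiv; ring.
Qed.

Lemma ntr_sum_diag x y : munit_valid x -> munit_valid y ->
  Rsum (map (fun k => ntr (mmul x (mmul (MUnit k k) y))) (seq 0 n)) = ntr (mmul x y).
Proof.
  assert (HnR : INR n <> 0) by (apply not_0_INR; lia).
  intros Hx Hy.
  destruct x as [| |p q], y as [| |r s]; simpl in Hx, Hy |- *;
    try (rewrite Rsum_const; simpl; ring).
  - rewrite (Rsum_ext _ (fun _ => / INR n)), Rsum_const, length_seq.
    + field; auto.
    + intros k Hk; apply in_seq in Hk; simpl; natcase.
  - rewrite (Rsum_ext _ (fun k => if Nat.eqb k r then ntr (MUnit r s) else 0)).
    + apply Rsum_delta; lia.
    + intros k _; simpl; natcase.
  - rewrite (Rsum_ext _ (fun k => if Nat.eqb k q then ntr (MUnit p q) else 0)).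
    + apply Rsum_delta; lia.
    + intros k _; simpl; natcase.
  - rewrite (Rsum_ext _ (fun k => if Nat.eqb k r then ntr (mmul (MUnit p q) (MUnit r s)) else 0)).
    + apply Rsum_delta; lia.
    + intros k _; simpl; natcase.
Qed.
End Trace.

(** * Extended words *)

(** Besides the moves [u_ij], [u_ij^*], an extended word may contain letters [Stay d a c],
    which multiply the factor [d] places above the current position of the [l^2(Z)] index
    by [E_ac] without moving it. They record generators that have already been merged. *)
Inductive letter := Move (g : gen) | Stay (d : Z) (a c : nat).

Definition ldisp (x : letter) : Z :=
  match x with Move g => if st g then (-1)%Z else 1%Z | Stay _ _ _ => 0%Z end.

Fixpoint disp (w : list letter) : Z :=
  match w with [] => 0%Z | x :: w' => (ldisp x + disp w')%Z end.

(** The matrix units with which the letter [x] multiplies the factor at relative position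
    [y] (measured from the position at which [x] is applied). *)
Definition lcol (x : letter) (y : Z) : list (nat * nat) :=
  match x with
  | Move g => if st g then (if Z.eqb y (-1) then [(gi g, gj g)] else [])
              else (if Z.eqb y 0 then [(gj g, gi g)] else [])
  | Stay d a c => if Z.eqb y d then [(a, c)] else []
  end.

(** All matrix units hitting position [y], leftmost (last applied) first. *)
Fixpoint col (w : list letter) (y : Z) : list (nat * nat) :=
  match w with [] => [] | x :: w' => lcol x (y - disp w')%Z ++ col w' y end.

Definition lreach (x : letter) : nat :=
  match x with Move _ => 1%nat | Stay d _ _ => S (Z.to_nat (Z.abs d)) end.

Fixpoint reach (w : list letter) : nat :=
  match w with [] => 0%nat | x :: w' => (lreach x + reach w')%nat end.

Definition xstep (x : letter) (s : hvec) : hvec :=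
  match x with
  | Move g => step g s
  | Stay d a c => let (k, F) := s in (k, upd F (k + d)%Z (Emul a c (F (k + d)%Z)))
  end.

Lemma disp_app v w : disp (v ++ w) = (disp v + disp w)%Z.
Proof. induction v; simpl; auto. rewrite IHv; lia. Qed.

Lemma col_app v w y : col (v ++ w) y = col v (y - disp w)%Z ++ col w y.
Proof.
  induction v as [|x v IH]; simpl; auto.
  rewrite IH, disp_app, app_assoc. do 3 f_equal. lia.
Qed.

Lemma reach_app v w : reach (v ++ w) = (reach v + reach w)%nat.
Proof. induction v; simpl; auto. rewrite IHv; lia. Qed.

Lemma reach_map_Move v : reach (map Move v) = length v.
Proof. induction v; simpl; auto. Qed.

Lemma disp_reach w : (Z.abs (disp w) <= Z.of_nat (reach w))%Z.
Proof. induction w as [|[[[|] i j]|d a c] w IH]; cbn [disp reach ldisp lreach st]; lia. Qed.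

Lemma col_reach w x : col w x <> [] -> (Z.abs x <= Z.of_nat (reach w))%Z.
Proof.
  induction w as [|l w IH]; simpl; intros H; [congruence|].
  pose proof (disp_reach w).
  destruct (col w x) eqn:E.
  - rewrite app_nil_r in H.
    destruct l as [[[|] i j]|d a c]; simpl in *; revert H;
      match goal with |- context [Z.eqb ?a ?b] => destruct (Z.eqb_spec a b) end;
      intros; try congruence; lia.
  - assert (Z.abs x <= Z.of_nat (reach w))%Z by (apply IH; congruence).
    destruct l as [[[|] i j]|d a c]; cbn [reach lreach]; lia.
Qed.

Lemma fold_xstep w k0 F0 : fold_right xstep (k0, F0) w =
  ((k0 + disp w)%Z, fun x => emuls (col w (x - k0)%Z) (F0 x)).
Proof.
  induction w as [|l w IH]; simpl.
  - rewrite Z.add_0_r; reflexivity.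
  - rewrite IH. destruct l as [[[|] i j]|d a c]; cbn [xstep step st gi gj ldisp lcol];
      f_equal; try lia; extensionality x; unfold upd; rewrite emuls_app;
      repeat match goal with |- context [Z.eqb ?a ?b] => destruct (Z.eqb_spec a b) end;
      try lia; subst; reflexivity.
Qed.

Section XHaar.
Variable n : nat.

Definition letter_valid (x : letter) : Prop :=
  match x with
  | Move g => (gi g < n /\ gj g < n)%nat
  | Stay _ a c => (a < n /\ c < n)%nat
  end.

Definition xvalid (w : list letter) : Prop := Forall letter_valid w.

Lemma xvalid_app v w : xvalid (v ++ w) <-> xvalid v /\ xvalid w.
Proof. apply Forall_app. Qed.

Lemma xvalid_map_Move w : valid n w -> xvalid (map Move w).
Proof. induction 1; constructor; auto. Qed.

Lemma col_valid w x : xvalid w -> Forall (pair_valid n) (col w x).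
Proof.
  induction 1 as [|l w Hl Hw IH]; simpl; auto. apply Forall_app; split; auto.
  destruct l as [[[|] i j]|d a c]; simpl; unfold lcol; simpl;
    match goal with |- context [Z.eqb ?a ?b] => destruct (Z.eqb a b) end;
    repeat constructor; unfold pair_valid; simpl in *; tauto.
Qed.

Definition colval (w : list letter) (x : Z) : munit := mprod (col w x).

Lemma colval_valid w x : xvalid w -> munit_valid n (colval w x).
Proof. intros; apply mprod_valid, col_valid; auto. Qed.

(** [haar] extended to words with [Stay] letters, computed over the window [[-N, N]]. *)
Definition hwin (N : nat) (w : list letter) : C :=
  if Z.eqb (disp w) 0
  then RtoC (zprod (fun x => ntr n (colval w x)) (- Z.of_nat N)%Z (2 * N + 1))
  else C0.

Definition xhaar (w : list letter) : C := hwin (reach w) w.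

Lemma colval_supported w : supported_in (reach w) (fun x => ntr n (colval w x)).
Proof.
  intros x Hx. apply col_reach. intros E; apply Hx. unfold colval; rewrite E; reflexivity.
Qed.

Lemma hwin_xhaar w N : (reach w <= N)%nat -> hwin N w = xhaar w.
Proof.
  intros HN. unfold xhaar, hwin. destruct (Z.eqb (disp w) 0); auto.
  f_equal. apply (zprod_window _ (reach w)); auto using colval_supported.
Qed.

Lemma xhaar_disp w : disp w <> 0%Z -> xhaar w = C0.
Proof. intros H. unfold xhaar, hwin. destruct (Z.eqb_spec (disp w) 0); tauto. Qed.

Lemma xhaar_nil : xhaar [] = C1.
Proof. unfold xhaar, hwin; simpl. unfold RtoC, C1; f_equal; ring. Qed.

(** Rotating a word translates the columns, and the trace of each column is cyclic. *)
Lemma xhaar_rotate v w : xvalid v -> xvalid w -> xhaar (v ++ w) = xhaar (w ++ v).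
Proof.
  intros Hv Hw. set (N := (2 * (reach v + reach w))%nat).
  rewrite <- (hwin_xhaar (v ++ w) N), <- (hwin_xhaar (w ++ v) N) by (rewrite reach_app; lia).
  unfold hwin. rewrite !disp_app, Z.add_comm.
  destruct (Z.eqb_spec (disp w + disp v) 0) as [E|]; auto. f_equal.
  set (f := fun x => ntr n (mmul (colval v (x - disp w)%Z) (colval w x))).
  assert (Hf : supported_in (reach v + reach w) f).
  { intros x Hx. pose proof (disp_reach w). unfold f in Hx.
    destruct (col w x) eqn:E1; [destruct (col v (x - disp w)%Z) eqn:E2|].
    - unfold colval in Hx; rewrite E1, E2 in Hx. contradiction.
    - assert (Z.abs (x - disp w) <= Z.of_nat (reach v))%Z by (apply col_reach; congruence).
      lia.
    - assert (Z.abs x <= Z.of_nat (reach w))%Z by (apply col_reach; congruence). lia. }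
  transitivity (zprod f (- Z.of_nat N) (2 * N + 1)).
  - apply zprod_ext. intros x _. unfold f, colval. rewrite col_app, mprod_app. reflexivity.
  - rewrite <- (zprod_window_shift f _ (disp w) N Hf) by (pose proof (disp_reach w); lia).
    apply zprod_ext. intros x _. unfold f, colval. rewrite col_app, mprod_app.
    replace (x + disp w - disp w)%Z with x by lia.
    replace (x - disp v)%Z with (x + disp w)%Z by lia.
    apply ntr_mmul_comm; apply colval_valid; auto.
Qed.

Hypothesis Hn : (0 < n)%nat.

Lemma haar_xhaar w : haar n w = xhaar (map Move w).
Proof.
  unfold haar, act.
  replace (fold_right step Omega w) with (fold_right xstep Omega (map Move w))
    by (induction w; simpl; congruence).
  unfold Omega. rewrite fold_xstep.
  unfold xhaar, hwin. rewrite reach_map_Move, Z.add_0_l.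
  destruct (Z.eqb (disp (map Move w)) 0); auto. f_equal.
  rewrite (fold_Rmult_zprod (fun x => mtrace n (emuls (col (map Move w) (x - 0)) Iden) / INR n)).
  rewrite Z.sub_0_l. apply zprod_ext. intros x _.
  rewrite Z.sub_0_r, emuls_mprod. apply mtrace_munit_mul; auto.
Qed.
End XHaar.

(** * Merging a generator with its adjoint *)

Definition is_stay (x : letter) : Prop :=
  match x with Stay _ _ _ => True | Move _ => False end.

Definition stay_nonneg (x : letter) : Prop :=
  match x with Stay d _ _ => (0 <= d)%Z | Move _ => True end.

Definition stays (T : list letter) : Prop := Forall is_stay T.

Definition upward (w : list letter) : Prop := Forall stay_nonneg w.

Definition shift (e : Z) (T : list letter) : list letter :=
  map (fun x => match x with Stay d a c => Stay (d + e)%Z a c | m => m end) T.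

Lemma disp_stays T : stays T -> disp T = 0%Z.
Proof. induction 1 as [|[g|d a c] T []]; simpl; lia. Qed.

Lemma shift_stays e T : stays T -> stays (shift e T).
Proof. induction 1 as [|[g|d a c] T []]; constructor; simpl; auto. Qed.

Lemma shift_upward T : stays T -> upward T -> upward (shift 1 T).
Proof.
  unfold upward, shift.
  induction 1 as [|[g|d a c] T [] HS IH]; intros Hu; inversion Hu; subst; simpl; constructor;
    simpl in *; auto; lia.
Qed.

Lemma shift_xvalid n e T : stays T -> xvalid n T -> xvalid n (shift e T).
Proof.
  unfold xvalid, shift.
  induction 1 as [|[g|d a c] T [] HS IH]; intros Hv; inversion Hv; subst; simpl; constructor;
    auto.
Qed.

Lemma col_shift e T y : stays T -> col (shift e T) y = col T (y - e)%Z.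
Proof.
  induction 1 as [|[g|d a c] T [] HS IH]; simpl; auto.
  rewrite IH, !disp_stays by auto using shift_stays. f_equal.
  destruct (Z.eqb_spec (y - 0) (d + e)), (Z.eqb_spec (y - e - 0) d); auto; lia.
Qed.

Lemma col_upward_below T : stays T -> upward T -> col T (-1) = [].
Proof.
  induction 1 as [|[g|d a c] T [] HS IH]; intros Hu; inversion Hu as [|? ? Hd]; subst;
    cbn [col lcol]; auto.
  rewrite IH, disp_stays by auto. simpl in Hd.
  destruct (Z.eqb_spec (-1 - 0) d); auto; lia.
Qed.

Section Merge.
Variable n : nat.
Variables (A T B : list letter) (a b c d : nat).
Hypotheses (HT : stays T) (HTu : upward T).

Let w1 := A ++ Move (mkgen true a b) :: T ++ Move (mkgen false c d) :: B.
Let w2 := A ++ shift 1 T ++ Stay 0 a c :: B.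

Lemma disp_merge : disp w1 = disp w2.
Proof.
  unfold w1, w2. rewrite !disp_app; cbn [disp ldisp st]. rewrite !disp_app; cbn [disp ldisp st].
  rewrite (disp_stays T), (disp_stays (shift 1 T)); auto using shift_stays. lia.
Qed.

(** [u_ab^*] and [u_cd] hit the same position, where they leave [E_ab E_dc = delta_bd E_ac];
    all other columns agree. *)
Lemma col_merge x :
  (x <> disp B -> col w1 x = col w2 x) /\
  (x = disp B -> col w1 x = col A 0 ++ (a, b) :: (d, c) :: col B x /\
                 col w2 x = col A 0 ++ (a, c) :: col B x).
Proof.
  unfold w1, w2. rewrite !col_app. cbn [col disp ldisp lcol st gi gj].
  rewrite !col_app, col_shift, !disp_app, (disp_stays T), (disp_stays (shift 1 T))
    by auto using shift_stays.
  cbn [col disp ldisp lcol st gi gj].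
  replace (x - (-1 + (0 + (1 + disp B))))%Z with (x - disp B)%Z by lia.
  replace (x - (0 + (0 + disp B)))%Z with (x - disp B)%Z by lia.
  replace (x - (0 + (1 + disp B)))%Z with (x - disp B - 1)%Z by lia.
  replace (x - (1 + disp B))%Z with (x - disp B - 1)%Z by lia.
  replace (x - (0 + disp B) - 1)%Z with (x - disp B - 1)%Z by lia.
  split; intros Hx.
  - rewrite (proj2 (Z.eqb_neq (x - disp B - 1) (-1))), (proj2 (Z.eqb_neq (x - disp B) 0))
      by lia. reflexivity.
  - subst x. rewrite Z.sub_diag. replace (0 - 1)%Z with (-1)%Z by reflexivity.
    rewrite col_upward_below by auto. split; reflexivity.
Qed.

Lemma xhaar_merge : xhaar n w1 = if Nat.eqb b d then xhaar n w2 else C0.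
Proof.
  set (N := (reach w1 + reach w2)%nat).
  rewrite <- (hwin_xhaar n w1 N), <- (hwin_xhaar n w2 N) by lia.
  assert (Ecol : forall x, colval w1 x =
            if Z.eqb x (disp B) then (if Nat.eqb b d then colval w2 x else MZero) else colval w2 x).
  { intros x. unfold colval. destruct (col_merge x) as [Hne Heq].
    destruct (Z.eqb_spec x (disp B)) as [Hx|Hx]; [|rewrite Hne; auto].
    destruct (Heq Hx) as [-> ->]. rewrite !mprod_app. cbn [mprod fold_right fst snd].
    fold (mprod (col B x)). rewrite !mmul_assoc, <- (mmul_assoc _ (MUnit a b)).
    simpl (mmul (MUnit a b) (MUnit d c)).
    destruct (Nat.eqb b d); [reflexivity|rewrite mmul_0r; reflexivity]. }
  unfold hwin. rewrite disp_merge. destruct (Z.eqb (disp w2) 0); [|destruct (Nat.eqb b d); auto].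
  destruct (Nat.eqb b d) eqn:Ebd.
  - f_equal. apply zprod_ext. intros x _. rewrite Ecol. destruct (Z.eqb x (disp B)); auto.
  - unfold RtoC, C0; f_equal. apply (zprod_zero _ _ _ (disp B)).
    + pose proof (disp_reach B).
      assert (reach B <= reach w1)%nat.
      { unfold w1. rewrite !reach_app. cbn [reach lreach]. rewrite reach_app. cbn [reach]. lia. }
      lia.
    + rewrite Ecol, Z.eqb_refl. reflexivity.
Qed.
End Merge.

Section StaySum.
Variable n : nat.
Hypothesis Hn : (0 < n)%nat.
Variables (A B : list letter) (e : Z).
Hypotheses (HA : xvalid n A) (HB : xvalid n B).

Lemma col_stay k x : col (A ++ Stay e k k :: B) x =
  if Z.eqb x (disp B + e) then col A (x - disp B) ++ (k, k) :: col B x else col (A ++ B) x.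
Proof.
  rewrite !col_app. cbn [col disp ldisp lcol]. rewrite Z.add_0_l.
  destruct (Z.eqb_spec x (disp B + e)), (Z.eqb_spec (x - disp B) e); try lia; reflexivity.
Qed.

(** The stay letters [E_kk], summed over [k], add up to the identity. *)
Lemma xhaar_sum_stay :
  Csum (map (fun k => xhaar n (A ++ Stay e k k :: B)) (seq 0 n)) = xhaar n (A ++ B).
Proof.
  set (N := (reach A + reach B + S (Z.to_nat (Z.abs e)))%nat).
  rewrite (Csum_map_ext _ (fun k => hwin n N (A ++ Stay e k k :: B)))
    by (intros; symmetry; apply hwin_xhaar; rewrite reach_app; simpl; lia).
  rewrite <- (hwin_xhaar n (A ++ B) N) by (rewrite reach_app; lia).
  unfold hwin.
  assert (Hd : forall k, disp (A ++ Stay e k k :: B) = disp (A ++ B))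
    by (intros; rewrite !disp_app; reflexivity).
  destruct (Z.eqb_spec (disp (A ++ B)) 0) as [E|E].
  2:{ rewrite (Csum_map_ext _ (fun _ => C0)) by (intros k _; rewrite Hd;
        destruct (Z.eqb_spec (disp (A ++ B)) 0); tauto). apply Csum_map_C0. }
  rewrite (Csum_map_ext _ (fun k => RtoC (zprod (fun x => ntr n (colval (A ++ Stay e k k :: B) x))
                                        (- Z.of_nat N) (2 * N + 1))))
    by (intros k _; rewrite Hd, E; reflexivity).
  rewrite Csum_RtoC. f_equal.
  pose proof (disp_reach B).
  rewrite (Rsum_zprod_single _ _ (fun x => ntr n (colval (A ++ B) x)) (disp B + e)).
  - apply zprod_ext. intros x _. destruct (Z.eqb_spec x (disp B + e)) as [Hx|]; auto.
    unfold colval. rewrite (Rsum_ext _ (fun k => ntr n (mmul (mprod (col A (x - disp B)))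
                             (mmul (MUnit k k) (mprod (col B x)))))).
    + rewrite ntr_sum_diag, col_app, mprod_app by (auto; apply mprod_valid, col_valid; auto).
      reflexivity.
    + intros k _. rewrite col_stay, (proj2 (Z.eqb_eq _ _) Hx), mprod_app. reflexivity.
  - lia.
  - intros k x Hx. unfold colval. rewrite col_stay, (proj2 (Z.eqb_neq _ _) Hx). reflexivity.
Qed.
End StaySum.

(** * The transpose anti-automorphism *)

(** [u_ij |-> u_ji] extends to an anti-automorphism of [U_n^nc]; on monomials it reverses the
    word and transposes every letter. *)
Definition gtrans (g : gen) : gen := mkgen (st g) (gj g) (gi g).

Definition rtrans (w : word) : word := rev (map gtrans w).

Lemma rtrans_app v w : rtrans (v ++ w) = rtrans w ++ rtrans v.
Proof. unfold rtrans. rewrite map_app, rev_app_distr. reflexivity. Qed.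

Lemma rtrans_involutive w : rtrans (rtrans w) = w.
Proof.
  unfold rtrans. rewrite map_rev, rev_involutive, map_map.
  rewrite map_ext with (g := fun g => g), map_id; [reflexivity|]. intros []; reflexivity.
Qed.

Lemma length_rtrans w : length (rtrans w) = length w.
Proof. unfold rtrans. rewrite length_rev, length_map. reflexivity. Qed.

Lemma rtrans_valid n w : valid n w -> valid n (rtrans w).
Proof.
  intros Hw. unfold valid, rtrans. apply Forall_rev, Forall_map.
  eapply Forall_impl; [|exact Hw]. simpl; tauto.
Qed.

Lemma disp_rtrans w : disp (map Move (rtrans w)) = disp (map Move w).
Proof.
  induction w as [|g w IH]; [reflexivity|].
  unfold rtrans in *; simpl. rewrite map_app, disp_app, IH. simpl. lia.
Qed.

Lemma col_rtrans w y : col (map Move (rtrans w)) y =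
  rev (map swap_pair (col (map Move w) (disp (map Move w) - 1 - y))).
Proof.
  revert y; induction w as [|g w IH]; intros y; [reflexivity|].
  change (rtrans (g :: w)) with (rtrans w ++ [gtrans g]).
  rewrite map_app, col_app, IH. cbn [map col disp ldisp lcol gtrans st gi gj].
  rewrite map_app, rev_app_distr, app_nil_r. f_equal.
  - do 3 f_equal. destruct (st g); lia.
  - destruct g as [[|] i j]; cbn [st gi gj];
      repeat match goal with |- context [Z.eqb ?a ?b] => destruct (Z.eqb_spec a b) end;
      reflexivity || lia.
Qed.

Lemma haar_rtrans n w : (0 < n)%nat -> haar n (rtrans w) = haar n w.
Proof.
  intros Hn. rewrite !haar_xhaar by auto.
  set (N := S (length w)).
  rewrite <- (hwin_xhaar n (map Move w) N), <- (hwin_xhaar n (map Move (rtrans w)) N)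
    by (rewrite reach_map_Move, ?length_rtrans; unfold N; lia).
  unfold hwin. rewrite disp_rtrans.
  destruct (Z.eqb_spec (disp (map Move w)) 0) as [E|]; auto. f_equal.
  rewrite <- (zprod_window_reflect _ (reach (map Move w)) (-1) N (colval_supported n _))
    by (rewrite reach_map_Move; unfold N; lia).
  apply zprod_ext. intros x _.
  unfold colval. rewrite col_rtrans, mprod_rev_swap, ntr_mtrans, E. reflexivity.
Qed.

Definition orthonormal_columns (n : nat) (phi : functional) : Prop :=
  forall (a b : word) (i j : nat), valid n a -> valid n b -> (i < n)%nat -> (j < n)%nat ->
    Csum_n n (fun k => phi (a ++ [us k i; u k j] ++ b)) = Cmul (delta i j) (phi (a ++ b)).

Definition orthonormal_rows (n : nat) (phi : functional) : Prop :=
  forall (a b : word) (i j : nat), valid n a -> valid n b -> (i < n)%nat -> (j < n)%nat ->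
    Csum_n n (fun k => phi (a ++ [u i k; us j k] ++ b)) = Cmul (delta i j) (phi (a ++ b)).

Lemma respects_relations_orthonormal n phi :
  respects_relations n phi <-> orthonormal_columns n phi /\ orthonormal_rows n phi.
Proof.
  unfold respects_relations, orthonormal_columns, orthonormal_rows. split.
  - intros H; split; intros; apply H; auto.
  - intros [Hc Hr]; split; auto.
Qed.

Lemma delta_sym i j : delta i j = delta j i.
Proof. unfold delta. rewrite Nat.eqb_sym. reflexivity. Qed.

Section Transposed.
Variables (n : nat) (phi : functional).

Let phiT : functional := fun w => phi (rtrans w).

Lemma orthonormal_rows_rtrans : orthonormal_columns n phi -> orthonormal_rows n phiT.
Proof.
  intros Hc a b i j Ha Hb Hi Hj. unfold phiT, Csum_n.
  rewrite (map_ext _ (fun k => phi (rtrans b ++ [us k j; u k i] ++ rtrans a)))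
    by (intros k; rewrite !rtrans_app, app_assoc; reflexivity).
  unfold orthonormal_columns, Csum_n in Hc.
  rewrite Hc, rtrans_app, delta_sym by auto using rtrans_valid.
  reflexivity.
Qed.

Lemma orthonormal_columns_rtrans : orthonormal_rows n phi -> orthonormal_columns n phiT.
Proof.
  intros Hr a b i j Ha Hb Hi Hj. unfold phiT, Csum_n.
  rewrite (map_ext _ (fun k => phi (rtrans b ++ [u j k; us i k] ++ rtrans a)))
    by (intros k; rewrite !rtrans_app, app_assoc; reflexivity).
  unfold orthonormal_rows, Csum_n in Hr.
  rewrite Hr, rtrans_app, delta_sym by auto using rtrans_valid.
  reflexivity.
Qed.

Lemma relations_rtrans : respects_relations n phi -> respects_relations n phiT.
Proof.
  rewrite !respects_relations_orthonormal. intros [Hc Hr].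
  auto using orthonormal_rows_rtrans, orthonormal_columns_rtrans.
Qed.

Lemma tracial_rtrans : tracial n phi -> tracial n phiT.
Proof.
  intros Htr v w Hv Hw. unfold phiT. rewrite !rtrans_app. apply Htr; auto using rtrans_valid.
Qed.
End Transposed.

Lemma ktuples_in n m ks :
  In ks (ktuples n m) -> length ks = m /\ Forall (fun k => (k < n)%nat) ks.
Proof.
  revert ks; induction m; simpl; intros ks Hk.
  - destruct Hk as [<-|[]]; simpl; auto.
  - apply in_flat_map in Hk as [k [Hk1 Hk2]]. apply in_map_iff in Hk2 as [ks' [<- Hks']].
    apply IHm in Hks' as [H1 H2]. apply in_seq in Hk1. simpl; split; auto.
    constructor; auto; lia.
Qed.

Lemma Csum_ktuples_add n a b (F : list nat -> C) :
  Csum (map F (ktuples n (a + b))) =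
  Csum (map (fun ks1 => Csum (map (fun ks2 => F (ks1 ++ ks2)) (ktuples n b))) (ktuples n a)).
Proof.
  revert F; induction a; intros; simpl.
  - rewrite Cadd_C0_r; reflexivity.
  - rewrite !Csum_flat_map. apply Csum_map_ext. intros k _.
    rewrite !map_map, (IHa (fun ks => F (k :: ks))). reflexivity.
Qed.

Lemma Csum_ktuples_rev n m (F : list nat -> C) :
  Csum (map (fun ks => F (rev ks)) (ktuples n m)) = Csum (map F (ktuples n m)).
Proof.
  revert F; induction m; intros; [reflexivity|].
  rewrite <- Nat.add_1_r at 2. rewrite Csum_ktuples_add.
  cbn [ktuples]. rewrite Csum_flat_map.
  rewrite (Csum_map_ext _ (fun k => Csum (map (fun ks => F (ks ++ [k])) (ktuples n m))))
    by (intros k _; rewrite map_map; apply (IHm (fun ks => F (ks ++ [k])))).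
  rewrite Csum_swap. apply Csum_map_ext. intros ks _.
  rewrite Csum_flat_map. simpl. apply Csum_map_ext. intros; Cring.
Qed.

Lemma left_word_app v w ks1 ks2 : length ks1 = length v ->
  left_word (v ++ w) (ks1 ++ ks2) = left_word v ks1 ++ left_word w ks2.
Proof.
  revert ks1; induction v; intros [|k ks1] Hl; simpl in *; try lia; auto.
  unfold left_word in *; simpl. rewrite IHv; auto.
Qed.

Lemma right_word_app v w ks1 ks2 : length ks1 = length v ->
  right_word (v ++ w) (ks1 ++ ks2) = right_word v ks1 ++ right_word w ks2.
Proof.
  revert ks1; induction v; intros [|k ks1] Hl; simpl in *; try lia; auto.
  unfold right_word in *; simpl. rewrite IHv; auto.
Qed.

Lemma left_word_rtrans w ks : length ks = length w ->
  left_word (rtrans w) (rev ks) = rtrans (right_word w ks).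
Proof.
  revert ks; induction w as [|g w IH]; intros [|k ks] Hl; simpl in Hl; try lia; auto.
  change (rtrans (g :: w)) with (rtrans w ++ [gtrans g]). simpl rev.
  rewrite left_word_app, IH by (rewrite ?length_rev, ?length_rtrans; lia).
  reflexivity.
Qed.

Lemma right_word_rtrans w ks : length ks = length w ->
  right_word (rtrans w) (rev ks) = rtrans (left_word w ks).
Proof.
  revert ks; induction w as [|g w IH]; intros [|k ks] Hl; simpl in Hl; try lia; auto.
  change (rtrans (g :: w)) with (rtrans w ++ [gtrans g]). simpl rev.
  rewrite right_word_app, IH by (rewrite ?length_rev, ?length_rtrans; lia).
  reflexivity.
Qed.

Lemma conv_rtrans n phi psi w :
  conv n phi psi (rtrans w) =
  conv n (fun v => psi (rtrans v)) (fun v => phi (rtrans v)) w.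
Proof.
  unfold conv. rewrite length_rtrans, <- Csum_ktuples_rev.
  apply Csum_map_ext. intros ks Hks. apply ktuples_in in Hks as [Hl _].
  rewrite left_word_rtrans, right_word_rtrans, Cmul_comm by auto. reflexivity.
Qed.

Fixpoint nmoves (w : list letter) : nat :=
  match w with
  | [] => 0%nat
  | Move _ :: w' => S (nmoves w')
  | Stay _ _ _ :: w' => nmoves w'
  end.

Lemma nmoves_app v w : nmoves (v ++ w) = (nmoves v + nmoves w)%nat.
Proof. induction v as [|[g|d a c] v IH]; simpl; auto. Qed.

Lemma nmoves_map_Move w : nmoves (map Move w) = length w.
Proof. induction w; simpl; auto. Qed.

Lemma nmoves_stays T : stays T -> nmoves T = 0%nat.
Proof. induction 1 as [|[g|d a c] T []]; simpl; auto. Qed.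

Definition moves_all (s : bool) (w : list letter) : Prop :=
  Forall (fun x => match x with Move g => st g = s | Stay _ _ _ => True end) w.

Lemma disp_moves_all s W : moves_all s W ->
  disp W = (if s then - Z.of_nat (nmoves W) else Z.of_nat (nmoves W))%Z.
Proof.
  induction 1 as [|[g|d a c] W Hx HW IH]; cbn [disp nmoves ldisp]; [destruct s; reflexivity| |];
    rewrite IH; [rewrite Hx|]; destruct s; lia.
Qed.

Lemma first_move W : stays W \/ exists T g Y, W = T ++ Move g :: Y /\ stays T.
Proof.
  induction W as [|[g|d a c] W IH]; [left; constructor| |].
  - right. exists [], g, W. split; [reflexivity|constructor].
  - destruct IH as [IH|[T [g [Y [-> HS]]]]]; [left; constructor; simpl; auto|].
    right. exists (Stay d a c :: T), g, Y. split; [reflexivity|constructor; simpl; auto].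
Qed.

Lemma last_move W : (0 < nmoves W)%nat -> exists Z g T, W = Z ++ Move g :: T /\ stays T.
Proof.
  induction W as [|x W IH]; simpl; intros Hm; [lia|].
  destruct (first_move W) as [HW|[T [g [Y [-> HS]]]]].
  - destruct x as [g|d a c]; [|rewrite nmoves_stays in Hm by auto; lia].
    exists [], g, W. split; auto.
  - destruct IH as [Z [g' [T' [E HS']]]]; [rewrite nmoves_app; simpl; lia|].
    exists (x :: Z), g', T'. rewrite E. split; auto.
Qed.

Lemma descent_or_sorted w :
  (exists X g1 T g2 Y, w = X ++ Move g1 :: T ++ Move g2 :: Y /\
                       st g1 = true /\ st g2 = false /\ stays T) \/
  (exists W1 W2, w = W1 ++ W2 /\ moves_all false W1 /\ moves_all true W2).
Proof.
  induction w as [|x w IH].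
  - right. exists [], []. repeat split; constructor.
  - destruct IH as [[X [g1 [T [g2 [Y [-> H]]]]]]|[W1 [W2 [-> [H1 H2]]]]].
    { left. exists (x :: X), g1, T, g2, Y. auto. }
    destruct x as [[[|] i j]|d a c].
    + destruct (first_move W1) as [HW|[T [g2 [Y [-> HS]]]]].
      * right. exists [], (Move (mkgen true i j) :: W1 ++ W2). repeat split; [constructor|].
        constructor; [reflexivity|]. apply Forall_app; split; auto.
        eapply Forall_impl; [|exact HW]. intros [g|]; simpl; tauto.
      * left. exists [], (mkgen true i j), T, g2, (Y ++ W2).
        rewrite <- app_assoc. repeat split; auto.
        apply Forall_app in H1 as [_ H1]. inversion H1; auto.
    + right. exists (Move (mkgen false i j) :: W1), W2. repeat split; auto. constructor; auto.
    + right. exists (Stay d a c :: W1), W2. repeat split; auto. constructor; simpl; auto.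
Qed.

Definition peak_form (w : list letter) : Prop :=
  exists g1 T g2 B, w = Move g1 :: T ++ Move g2 :: B /\ st g1 = true /\ st g2 = false /\ stays T.

Lemma rotate_to_peak w : disp w = 0%Z -> (0 < nmoves w)%nat ->
  exists v1 v2, w = v1 ++ v2 /\ peak_form (v2 ++ v1).
Proof.
  intros HK Hm. destruct (descent_or_sorted w)
    as [[X [g1 [T [g2 [Y [-> [H1 [H2 HS]]]]]]]]|[W1 [W2 [-> [H1 H2]]]]].
  - exists X, (Move g1 :: T ++ Move g2 :: Y). split; auto.
    exists g1, T, g2, (Y ++ X). simpl. rewrite <- app_assoc. auto.
  - rewrite disp_app, (disp_moves_all _ _ H1), (disp_moves_all _ _ H2) in HK.
    rewrite nmoves_app in Hm.
    destruct (first_move W1) as [HW|[S1 [g2 [Z1 [-> HS1]]]]];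
      [rewrite nmoves_stays in HK, Hm by auto; lia|].
    destruct (last_move W2) as [Z2 [g1 [S2 [-> HS2]]]]; [lia|].
    exists (S1 ++ Move g2 :: Z1 ++ Z2), (Move g1 :: S2). split.
    + rewrite <- !app_assoc. simpl. rewrite <- app_assoc. reflexivity.
    + exists g1, (S2 ++ S1), g2, (Z1 ++ Z2). rewrite <- !app_assoc. repeat split.
      * apply Forall_app in H2 as [_ H2]. inversion H2; auto.
      * apply Forall_app in H1 as [_ H1]. inversion H1; auto.
      * apply Forall_app; auto.
Qed.

(** * Left invariance *)

(** Splitting the moves of an extended word between the two tensor factors; [Stay] letters
    stay in the left factor. *)
Fixpoint xleft (w : list letter) (ks : list nat) : list letter :=
  match w, ks with
  | [], _ => []
  | Move g :: w', k :: ks' => Move (mkgen (st g) (gi g) k) :: xleft w' ks'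
  | Move _ :: _, [] => []
  | Stay d a c :: w', _ => Stay d a c :: xleft w' ks
  end.

Fixpoint xright (w : list letter) (ks : list nat) : word :=
  match w, ks with
  | [], _ => []
  | Move g :: w', k :: ks' => mkgen (st g) k (gj g) :: xright w' ks'
  | Move _ :: _, [] => []
  | Stay _ _ _ :: w', _ => xright w' ks
  end.

Lemma xleft_app v w ks1 ks2 : length ks1 = nmoves v ->
  xleft (v ++ w) (ks1 ++ ks2) = xleft v ks1 ++ xleft w ks2.
Proof.
  revert ks1; induction v as [|[g|d a c] v IH]; intros ks1 Hl; simpl in *.
  - destruct ks1; simpl in *; auto; lia.
  - destruct ks1; simpl in *; [lia|]. rewrite IH; auto.
  - rewrite IH; auto.
Qed.

Lemma xright_app v w ks1 ks2 : length ks1 = nmoves v ->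
  xright (v ++ w) (ks1 ++ ks2) = xright v ks1 ++ xright w ks2.
Proof.
  revert ks1; induction v as [|[g|d a c] v IH]; intros ks1 Hl; simpl in *.
  - destruct ks1; simpl in *; auto; lia.
  - destruct ks1; simpl in *; [lia|]. rewrite IH; auto.
  - rewrite IH; auto.
Qed.

Lemma xleft_stays T w ks : stays T -> xleft (T ++ w) ks = T ++ xleft w ks.
Proof. induction 1 as [|[g|d a c] T [] HS IH]; simpl; auto. rewrite IH; auto. Qed.

Lemma xright_stays T w ks : stays T -> xright (T ++ w) ks = xright w ks.
Proof. induction 1 as [|[g|d a c] T [] HS IH]; simpl; auto. Qed.

Lemma disp_xleft w ks : length ks = nmoves w -> disp (xleft w ks) = disp w.
Proof.
  revert ks; induction w as [|[g|d a c] w IH]; intros ks Hl; simpl in *; auto.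
  destruct ks; simpl in *; [lia|]. rewrite IH; auto.
Qed.

Lemma xleft_xright_nil w : nmoves w = 0%nat -> xleft w [] = w /\ xright w [] = [].
Proof.
  induction w as [|[g|d a c] w IH]; simpl; intros; try lia; auto.
  destruct IH as [-> ->]; auto.
Qed.

Lemma map_Move_left_word w ks : length ks = length w ->
  map Move (left_word w ks) = xleft (map Move w) ks.
Proof.
  revert ks; induction w as [|g w IH]; intros [|k ks] Hl; simpl in *; try lia; auto.
  unfold left_word in *; simpl. rewrite IH; auto.
Qed.

Lemma right_word_xright w ks : length ks = length w -> right_word w ks = xright (map Move w) ks.
Proof.
  revert ks; induction w as [|g w IH]; intros [|k ks] Hl; simpl in *; try lia; auto.
  unfold right_word in *; simpl. rewrite IH; auto.
Qed.

Section LeftInvariance.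
Variables (n : nat) (phi : functional).
Hypotheses (Hn : (0 < n)%nat) (Hphi0 : phi [] = C1)
  (Hcol : orthonormal_columns n phi) (Htr : tracial n phi).

Lemma xvalid_xleft w ks : xvalid n w -> Forall (fun k => (k < n)%nat) ks -> xvalid n (xleft w ks).
Proof.
  intros Hw; revert ks; induction Hw as [|[g|d a c] w Hx Hw IH]; intros ks Hks; simpl.
  - constructor.
  - destruct ks as [|k ks]; [constructor|]. inversion Hks; subst.
    constructor; [simpl in *; tauto|apply IH; auto].
  - constructor; [exact Hx|apply IH; auto].
Qed.

Lemma valid_xright w ks : xvalid n w -> Forall (fun k => (k < n)%nat) ks -> valid n (xright w ks).
Proof.
  intros Hw; revert ks; induction Hw as [|[g|d a c] w Hx Hw IH]; intros ks Hks; simpl; auto.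
  - constructor.
  - destruct ks as [|k ks]; [constructor|]. inversion Hks; subst.
    constructor; [simpl in *; tauto|apply IH; auto].
Qed.

(** The convolution [h *_T phi] evaluated on an extended word. *)
Definition xconv (w : list letter) : C :=
  Csum (map (fun ks => Cmul (xhaar n (xleft w ks)) (phi (xright w ks))) (ktuples n (nmoves w))).

Lemma xconv_rotate v w : xvalid n v -> xvalid n w -> xconv (v ++ w) = xconv (w ++ v).
Proof.
  intros Hv Hw. unfold xconv. rewrite !nmoves_app, !Csum_ktuples_add, Csum_swap.
  apply Csum_map_ext. intros ks2 H2. apply Csum_map_ext. intros ks1 H1.
  apply ktuples_in in H1 as [L1 F1]. apply ktuples_in in H2 as [L2 F2].
  rewrite xleft_app, xright_app, xleft_app, xright_app by auto.
  rewrite xhaar_rotate, Htr by auto using xvalid_xleft, valid_xright. reflexivity.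
Qed.

Lemma xconv_unbalanced w : disp w <> 0%Z -> xconv w = xhaar n w.
Proof.
  intros HK. unfold xconv. rewrite xhaar_disp by auto.
  rewrite (Csum_map_ext _ (fun _ => C0)); [apply Csum_map_C0|].
  intros ks Hks. apply ktuples_in in Hks as [Hl _].
  rewrite xhaar_disp by (rewrite disp_xleft; auto). Cring.
Qed.

Section Peak.
Variables (T B : list letter) (a b c d : nat).
Let peak := Move (mkgen true a b) :: T ++ Move (mkgen false c d) :: B.
Let merged := shift 1 T ++ Stay 0 a c :: B.
Hypotheses (HT : stays T) (Hv : xvalid n peak) (Hu : upward peak).

Lemma peak_upward_stays : upward T.
Proof. apply Forall_inv_tail, Forall_app in Hu as [HuT _]. exact HuT. Qed.

Lemma merged_upward : upward merged.
Proof.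
  apply Forall_inv_tail, Forall_app in Hu as [HuT HuB]. apply Forall_inv_tail in HuB.
  apply Forall_app; split; [apply shift_upward; auto|constructor; simpl; auto; lia].
Qed.

Lemma merged_valid : xvalid n merged.
Proof.
  apply Forall_inv in Hv as Ha. apply Forall_inv_tail, Forall_app in Hv as [HvT HvB].
  apply Forall_inv in HvB as Hc. apply Forall_inv_tail in HvB.
  apply xvalid_app; split; [apply shift_xvalid; auto|constructor; simpl in *; auto; tauto].
Qed.

Lemma nmoves_peak : nmoves peak = S (S (nmoves merged)).
Proof.
  unfold peak, merged. cbn [nmoves].
  rewrite !nmoves_app, (nmoves_stays T), (nmoves_stays (shift 1 T)) by auto using shift_stays.
  reflexivity.
Qed.

Lemma xhaar_peak : xhaar n peak = if Nat.eqb b d then xhaar n merged else C0.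
Proof. apply (xhaar_merge n [] T B); auto using peak_upward_stays. Qed.

Lemma xconv_peak_term k1 k2 ks :
  Cmul (xhaar n (xleft peak (k1 :: k2 :: ks))) (phi (xright peak (k1 :: k2 :: ks))) =
  if Nat.eqb k1 k2
  then Cmul (xhaar n (xleft merged ks)) (phi ([] ++ [us k1 b; u k1 d] ++ xright B ks))
  else C0.
Proof.
  unfold peak, merged. cbn [xleft xright st gi gj].
  rewrite !xleft_stays, xright_stays by auto using shift_stays. cbn [xleft xright st gi gj app].
  pose proof (xhaar_merge n [] T (xleft B ks) a k1 c k2 HT peak_upward_stays) as Hm.
  simpl in Hm. rewrite Hm. destruct (Nat.eqb_spec k1 k2); [subst; reflexivity|Cring].
Qed.

Lemma xconv_peak : xconv peak = Cmul (delta b d) (xconv merged).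
Proof.
  assert (HvB : xvalid n B /\ (b < n /\ d < n)%nat).
  { apply Forall_inv in Hv as Hb. apply Forall_inv_tail, Forall_app in Hv as [_ HvB].
    apply Forall_inv in HvB as Hd. apply Forall_inv_tail in HvB. simpl in *; tauto. }
  destruct HvB as [HvB [Hb Hd]].
  unfold xconv at 1. rewrite nmoves_peak. cbn [ktuples]. rewrite Csum_flat_map.
  rewrite (Csum_map_ext _ (fun k1 => Csum (map (fun ks =>
             Cmul (xhaar n (xleft merged ks)) (phi ([] ++ [us k1 b; u k1 d] ++ xright B ks)))
             (ktuples n (nmoves merged))))).
  2:{ intros k1 Hk1. apply in_seq in Hk1. rewrite map_map, Csum_flat_map.
      rewrite (Csum_single _ k1) by (lia || (intros k2 Hk2; rewrite map_map;
        rewrite (Csum_map_ext _ (fun _ => C0)) by (intros ks _; rewrite xconv_peak_term;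
          destruct (Nat.eqb_spec k1 k2); [lia|reflexivity]); apply Csum_map_C0)).
      rewrite map_map. apply Csum_map_ext. intros ks _.
      rewrite xconv_peak_term, Nat.eqb_refl. reflexivity. }
  rewrite Csum_swap. unfold xconv. rewrite <- Csum_map_mull.
  apply Csum_map_ext. intros ks Hks. apply ktuples_in in Hks as [_ Hks].
  rewrite Csum_map_mull. unfold orthonormal_columns, Csum_n in Hcol.
  rewrite Hcol by (auto; constructor || apply valid_xright; auto).
  unfold merged. rewrite xright_stays by auto using shift_stays. simpl. Cring.
Qed.
End Peak.

Lemma xconv_xhaar m w : nmoves w = m -> xvalid n w -> upward w -> xconv w = xhaar n w.
Proof.
  revert w; induction m as [m IH] using (well_founded_induction lt_wf); intros w Hm Hv Hu.
  destruct (Nat.eq_dec m 0) as [E|E].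
  { rewrite E in Hm. unfold xconv. rewrite Hm. simpl.
    destruct (xleft_xright_nil w Hm) as [-> ->]. rewrite Hphi0. Cring. }
  destruct (Z.eq_dec (disp w) 0) as [HK|HK]; [|apply xconv_unbalanced; auto].
  destruct (rotate_to_peak w HK) as [v1 [v2 [-> [g1 [T [g2 [B [Hrot [H1 [H2 HT]]]]]]]]]]; [lia|].
  apply xvalid_app in Hv as [Hv1 Hv2].
  rewrite xconv_rotate, xhaar_rotate, Hrot by auto.
  destruct g1 as [s1 a b], g2 as [s2 c d]; simpl in H1, H2; subst s1 s2.
  assert (Hv' : xvalid n (Move (mkgen true a b) :: T ++ Move (mkgen false c d) :: B))
    by (rewrite <- Hrot; apply xvalid_app; auto).
  assert (Hu' : upward (Move (mkgen true a b) :: T ++ Move (mkgen false c d) :: B))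
    by (rewrite <- Hrot; unfold upward in *; apply Forall_app in Hu; apply Forall_app; tauto).
  assert (Hmerged : (nmoves (shift 1 T ++ Stay 0 a c :: B) < m)%nat).
  { replace m with (nmoves (v2 ++ v1)) by (rewrite <- Hm, !nmoves_app; lia).
    rewrite Hrot, nmoves_peak; auto. }
  rewrite xconv_peak, xhaar_peak, (IH _ Hmerged) by eauto using merged_valid, merged_upward.
  unfold delta. destruct (Nat.eqb b d); Cring.
Qed.

Lemma conv_haar_left : feq n (conv n (haar n) phi) (haar n).
Proof.
  intros w Hw. rewrite haar_xhaar by auto.
  rewrite <- (xconv_xhaar (nmoves (map Move w))); auto.
  - unfold conv, xconv.
    rewrite nmoves_map_Move.
    apply Csum_map_ext. intros ks Hks. apply ktuples_in in Hks as [Hl _].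
    rewrite haar_xhaar, map_Move_left_word, right_word_xright by auto. reflexivity.
  - apply xvalid_map_Move; auto.
  - apply Forall_map, Forall_forall; simpl; auto.
Qed.
End LeftInvariance.

(** * Positivity *)

Lemma Rsum_bilinear {A T} (a b : A -> R) (F : A -> T -> R) (l : list A) (Ts : list T) :
  Rsum (map (fun p => Rsum (map (fun q =>
    a p * b q * Rsum (map (fun t => F p t * F q t) Ts)) l)) l) =
  Rsum (map (fun t =>
    Rsum (map (fun p => a p * F p t) l) * Rsum (map (fun q => b q * F q t) l)) Ts).
Proof.
  rewrite (Rsum_ext _ (fun p => Rsum (map (fun t =>
             Rsum (map (fun q => (a p * F p t) * (b q * F q t)) l)) Ts))).
  2:{ intros p _. rewrite Rsum_swap. apply Rsum_ext. intros q _.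
      rewrite <- Rsum_mull. apply Rsum_ext. intros; ring. }
  rewrite Rsum_swap. apply Rsum_ext. intros t _. rewrite Rsum_prod. reflexivity.
Qed.

Lemma gram_form_nonneg {A T} (l : list (C * A)) (F : A -> T -> R) (Ts : list T) (c : R) :
  0 <= c ->
  let s := Csum (flat_map (fun p => map (fun q =>
             Cmul (Cmul (Cconj (fst p)) (fst q))
                  (RtoC (c * Rsum (map (fun t => F (snd p) t * F (snd q) t) Ts)))) l) l) in
  snd s = 0 /\ 0 <= fst s.
Proof.
  intros Hc s. set (G := fun p q : C * A => Rsum (map (fun t => F (snd p) t * F (snd q) t) Ts)).
  set (x := fun p : C * A => fst (fst p)). set (y := fun p : C * A => snd (fst p)).
  assert (Hbil : forall a b : C * A -> R,
    Rsum (map (fun p => Rsum (map (fun q => a p * b q * G p q) l)) l) =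
    Rsum (map (fun t => Rsum (map (fun p => a p * F (snd p) t) l) *
                        Rsum (map (fun q => b q * F (snd q) t) l)) Ts))
    by (intros; apply (Rsum_bilinear a b (fun p => F (snd p)))).
  unfold s. rewrite snd_Csum, fst_Csum, !Rsum_flat_map.
  (* With [c_p = x_p + i y_p], the term [(p, q)] is [(x_p x_q + y_p y_q) G_pq] plus [i] times
     the antisymmetric [(x_p y_q - y_p x_q) G_pq]. *)
  split.
  - rewrite (Rsum_ext _ (fun p => c * (Rsum (map (fun q => x p * y q * G p q) l) +
                                    -1 * Rsum (map (fun q => y p * x q * G p q) l)))).
    + rewrite Rsum_mull, Rsum_add, Rsum_mull, !Hbil.
      rewrite (Rsum_ext (fun t => Rsum (map (fun p => y p * F (snd p) t) l) * _)
                 (fun t => Rsum (map (fun p => x p * F (snd p) t) l) *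
                           Rsum (map (fun q => y q * F (snd q) t) l))) by (intros; ring).
      ring.
    + intros p _. rewrite map_map, <- Rsum_mull, <- Rsum_add, <- Rsum_mull.
      apply Rsum_ext. intros q _. unfold x, y, G, Cmul, Cconj, RtoC; simpl. ring.
  - rewrite (Rsum_ext _ (fun p => c * (Rsum (map (fun q => x p * x q * G p q) l) +
                                    Rsum (map (fun q => y p * y q * G p q) l)))).
    + rewrite Rsum_mull, Rsum_add, !Hbil. apply Rmult_le_pos; auto.
      apply Rplus_le_le_0_compat; apply Rsum_nonneg; intros; apply Rle_0_sqr.
    + intros p _. rewrite map_map, <- Rsum_add, <- Rsum_mull.
      apply Rsum_ext. intros q _. unfold x, y, G, Cmul, Cconj, RtoC; simpl. ring.
Qed.

Definition gflip (g : gen) : gen := mkgen (negb (st g)) (gi g) (gj g).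

Lemma adj_cons g v : adj (g :: v) = adj v ++ [gflip g].
Proof. reflexivity. Qed.

Lemma disp_adj v : disp (map Move (adj v)) = (- disp (map Move v))%Z.
Proof.
  induction v as [|g v IH]; [reflexivity|].
  rewrite adj_cons, map_app, disp_app, IH. cbn [map disp ldisp gflip st].
  destruct (st g); cbn [negb]; lia.
Qed.

(** [x^*] runs the moves of [x] backwards: it reverses the columns and transposes their
    matrix units. *)
Lemma col_adj v y : col (map Move (adj v)) y =
  rev (map swap_pair (col (map Move v) (y + disp (map Move v))%Z)).
Proof.
  revert y; induction v as [|g v IH]; intros y; [reflexivity|].
  rewrite adj_cons, map_app, col_app, IH. cbn [map col disp ldisp lcol gflip st gi gj].
  rewrite map_app, rev_app_distr, app_nil_r. f_equal.
  - do 3 f_equal. destruct (st g); cbn [negb]; lia.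
  - destruct g as [[|] i j]; cbn [negb st gi gj];
      repeat match goal with |- context [Z.eqb ?a ?b] => destruct (Z.eqb_spec a b) end;
      try reflexivity; lia.
Qed.

Section Positivity.
Variable n : nat.
Hypothesis Hn : (0 < n)%nat.

Definition entry (x : munit) (ab : nat * nat) : R :=
  match x with
  | MZero => 0
  | MOne => if Nat.eqb (fst ab) (snd ab) then 1 else 0
  | MUnit p q => if Nat.eqb (fst ab) p && Nat.eqb (snd ab) q then 1 else 0
  end.

Definition pairs : list (nat * nat) := flat_map (fun a => map (pair a) (seq 0 n)) (seq 0 n).

Lemma Rsum_pairs_unit p q (h : nat * nat -> R) : (p < n)%nat -> (q < n)%nat ->
  Rsum (map (fun ab => entry (MUnit p q) ab * h ab) pairs) = h (p, q).
Proof.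
  intros Hp Hq. unfold pairs. rewrite Rsum_flat_map.
  rewrite (Rsum_ext _ (fun a => if Nat.eqb a p then h (a, q) else 0)).
  - apply (Rsum_delta (fun a => h (a, q))); auto.
  - intros a _. rewrite map_map. simpl. destruct (Nat.eqb a p).
    + rewrite (Rsum_ext _ (fun b => if Nat.eqb b q then h (a, b) else 0)).
      * apply (Rsum_delta (fun b => h (a, b))); auto.
      * intros b _. simpl. destruct (Nat.eqb b q); ring.
    + rewrite (Rsum_ext _ (fun _ => 0)), Rsum_const by (intros; simpl; ring). ring.
Qed.

Lemma ntr_mtrans_mmul x y : munit_valid n x -> munit_valid n y ->
  ntr n (mmul (mtrans x) y) = / INR n * Rsum (map (fun ab => entry x ab * entry y ab) pairs).
Proof.
  assert (HnR : INR n <> 0) by (apply not_0_INR; lia).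
  intros Hx Hy. destruct x as [| |p q].
  - rewrite (Rsum_ext _ (fun _ => 0)), Rsum_const by (intros; simpl; ring). simpl; ring.
  - destruct y as [| |r s]; simpl in Hy.
    + rewrite (Rsum_ext _ (fun _ => 0)), Rsum_const by (intros; simpl; ring). simpl; ring.
    + unfold pairs. rewrite Rsum_flat_map.
      rewrite (Rsum_ext _ (fun _ => 1)), Rsum_const, length_seq; [simpl; field; auto|].
      intros a Ha. apply in_seq in Ha. rewrite map_map.
      rewrite (Rsum_ext _ (fun b => if Nat.eqb b a then 1 else 0)).
      * apply (Rsum_delta (fun _ => 1)); lia.
      * intros b _. simpl. natcase; ring.
    + rewrite (Rsum_ext _ (fun ab => entry (MUnit r s) ab * entry MOne ab)) by (intros; ring).
      rewrite Rsum_pairs_unit by tauto. simpl. natcase; ring.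
  - simpl in Hx. rewrite Rsum_pairs_unit by tauto.
    destruct y as [| |r s]; simpl in *; natcase; ring.
Qed.

Definition zrange (N : nat) : list Z :=
  map (fun i => (Z.of_nat i - Z.of_nat N)%Z) (seq 0 (2 * N + 1)).

Lemma Rsum_zrange_eq (a b : Z) N : (Z.abs a <= Z.of_nat N)%Z ->
  Rsum (map (fun k => (if Z.eqb a k then 1 else 0) * (if Z.eqb b k then 1 else 0)) (zrange N)) =
  if Z.eqb a b then 1 else 0.
Proof.
  intros Ha. unfold zrange. rewrite map_map.
  rewrite (Rsum_ext _ (fun i => if Nat.eqb i (Z.to_nat (a + Z.of_nat N))
                                then (if Z.eqb a b then 1 else 0) else 0)).
  - apply (Rsum_delta (fun _ => _)); lia.
  - intros i _. destruct (Nat.eqb_spec i (Z.to_nat (a + Z.of_nat N)));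
      destruct (Z.eqb_spec a (Z.of_nat i - Z.of_nat N)); try lia.
    + subst a. destruct (Z.eqb_spec (Z.of_nat i - Z.of_nat N) b); subst; rewrite ?Z.eqb_refl;
        [ring|]. destruct (Z.eqb_spec b (Z.of_nat i - Z.of_nat N)); [lia|ring].
    + ring.
Qed.

Variable N : nat.

(** Real feature vectors [F_v] with [haar (v^* w) = c * <F_v, F_w>]: a feature is an index
    [k] for the displacement together with one entry [s_x] of each column [x]. *)
Definition features : list (Z * list (nat * nat)) :=
  flat_map (fun k => map (pair k) (tuples pairs (2 * N + 1))) (zrange N).

Definition feature (v : word) (t : Z * list (nat * nat)) : R :=
  (if Z.eqb (disp (map Move v)) (fst t) then 1 else 0) *
  zprod_choice (fun x ab => entry (colval (map Move v) x) ab) (- Z.of_nat N) (snd t).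

Definition gram_scale : R := zprod (fun _ => / INR n) (- Z.of_nat N) (2 * N + 1).

Lemma haar_adj_app v w : (length v + length w <= N)%nat ->
  haar n (adj v ++ w) =
  if Z.eqb (disp (map Move v)) (disp (map Move w))
  then RtoC (zprod (fun x => ntr n (mmul (mtrans (colval (map Move v) x)) (colval (map Move w) x)))
                   (- Z.of_nat N) (2 * N + 1))
  else C0.
Proof.
  intros HN. rewrite haar_xhaar, map_app by auto.
  rewrite <- (hwin_xhaar n _ N)
    by (rewrite reach_app, !reach_map_Move; unfold adj; rewrite length_rev, length_map; lia).
  unfold hwin. rewrite disp_app, disp_adj.
  destruct (Z.eqb_spec (- disp (map Move v) + disp (map Move w)) 0),
    (Z.eqb_spec (disp (map Move v)) (disp (map Move w))); try lia; auto.
  f_equal. apply zprod_ext. intros x _.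
  unfold colval. rewrite col_app, col_adj, mprod_app, mprod_rev_swap.
  replace (x - disp (map Move w) + disp (map Move v))%Z with x by lia. reflexivity.
Qed.

Lemma haar_gram v w : valid n v -> valid n w -> (length v + length w <= N)%nat ->
  haar n (adj v ++ w) =
  RtoC (gram_scale * Rsum (map (fun t => feature v t * feature w t) features)).
Proof.
  intros Hv Hw HN. rewrite haar_adj_app by auto.
  assert (Hd : (Z.abs (disp (map Move v)) <= Z.of_nat N)%Z)
    by (pose proof (disp_reach (map Move v)); rewrite reach_map_Move in *; lia).
  unfold features, feature. rewrite Rsum_flat_map.
  set (P := fun s => zprod_choice (fun x ab => entry (colval (map Move v) x) ab) (- Z.of_nat N) s *
                     zprod_choice (fun x ab => entry (colval (map Move w) x) ab) (- Z.of_nat N) s).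
  rewrite (Rsum_ext _ (fun k => (if Z.eqb (disp (map Move v)) k then 1 else 0) *
                               (if Z.eqb (disp (map Move w)) k then 1 else 0) *
                               Rsum (map P (tuples pairs (2 * N + 1))))).
  2:{ intros k _. rewrite map_map, <- Rsum_mull. apply Rsum_ext. intros s _.
      unfold P; simpl; ring. }
  rewrite (Rsum_ext _ (fun k => Rsum (map P (tuples pairs (2 * N + 1))) *
     ((if Z.eqb (disp (map Move v)) k then 1 else 0) *
      (if Z.eqb (disp (map Move w)) k then 1 else 0))))
    by (intros; ring).
  rewrite Rsum_mull, Rsum_zrange_eq by auto.
  destruct (Z.eqb (disp (map Move v)) (disp (map Move w))); [|unfold RtoC, C0; f_equal; ring].
  f_equal. rewrite Rmult_1_r. unfold gram_scale.
  rewrite (zprod_ext _ (fun x => / INR n * Rsum (map (fun ab =>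
             entry (colval (map Move v) x) ab * entry (colval (map Move w) x) ab) pairs))).
  - rewrite zprod_mult, zprod_expand. f_equal. apply Rsum_ext. intros s _.
    unfold P. rewrite zprod_choice_mult. reflexivity.
  - intros x _. apply ntr_mtrans_mmul; apply colval_valid, xvalid_map_Move; auto.
Qed.

Lemma gram_scale_pos : 0 < gram_scale.
Proof. apply zprod_const_pos, Rinv_0_lt_compat, lt_0_INR; lia. Qed.
End Positivity.

Definition total_length (l : list (C * word)) : nat :=
  fold_right (fun p acc => (length (snd p) + acc)%nat) 0%nat l.

Lemma length_le_total l p : In p l -> (length (snd p) <= total_length l)%nat.
Proof.
  induction l as [|q l IH]; simpl; intros Hp; [contradiction|].
  destruct Hp as [<-|Hp]; [lia|]. specialize (IH Hp); lia.
Qed.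

Lemma haar_positive n : (0 < n)%nat -> positive n (haar n).
Proof.
  intros Hn l Hl. cbv zeta. set (N := (2 * total_length l)%nat).
  rewrite Forall_forall in Hl.
  pose proof (gram_form_nonneg l (feature N) (features n N) (gram_scale n N)) as G.
  cbv zeta in G. rewrite !flat_map_concat_map in G |- *.
  erewrite map_ext_in; [apply G, Rlt_le, gram_scale_pos; auto|].
  intros p Hp. apply map_ext_in. intros q Hq.
  pose proof (length_le_total l p Hp). pose proof (length_le_total l q Hq).
  rewrite (haar_gram n Hn N) by (auto; unfold N, word in *; lia). reflexivity.
Qed.

Section Haar.
Variable n : nat.
Hypothesis Hn : (0 < n)%nat.

Lemma haar_nil : haar n [] = C1.
Proof. rewrite haar_xhaar by auto. apply xhaar_nil. Qed.

Lemma haar_tracial : tracial n (haar n).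
Proof.
  intros v w Hv Hw. rewrite !haar_xhaar, !map_app by auto.
  apply xhaar_rotate; apply xvalid_map_Move; auto.
Qed.

Lemma haar_rtrans_fun : (fun w => haar n (rtrans w)) = haar n.
Proof. extensionality w. apply haar_rtrans; auto. Qed.

Lemma haar_orthonormal_columns : orthonormal_columns n (haar n).
Proof.
  intros a b i j Ha Hb Hi Hj. unfold Csum_n.
  rewrite (Csum_map_ext _ (fun k => if Nat.eqb i j
             then xhaar n (map Move a ++ Stay 0 k k :: map Move b) else C0)).
  - rewrite haar_xhaar, map_app by auto. unfold delta. destruct (Nat.eqb i j).
    + rewrite xhaar_sum_stay by (auto; apply xvalid_map_Move; auto). Cring.
    + rewrite Csum_map_C0. Cring.
  - intros k _. rewrite haar_xhaar by auto.
    pose proof (xhaar_merge n (map Move a) [] (map Move b) k i k j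
                  (Forall_nil _) (Forall_nil _)) as Hm.
    rewrite !map_app. simpl in Hm |- *. exact Hm.
Qed.

Lemma haar_relations : respects_relations n (haar n).
Proof.
  apply respects_relations_orthonormal. split; [apply haar_orthonormal_columns|].
  rewrite <- haar_rtrans_fun. apply orthonormal_rows_rtrans, haar_orthonormal_columns.
Qed.

Lemma conv_haar_right phi : phi [] = C1 -> respects_relations n phi -> tracial n phi ->
  feq n (conv n phi (haar n)) (haar n).
Proof.
  intros H0 Hrel Htr w Hw.
  rewrite <- (rtrans_involutive w) at 1. rewrite conv_rtrans, haar_rtrans_fun.
  rewrite (conv_haar_left n (fun v => phi (rtrans v))); auto using rtrans_valid, haar_rtrans.
  - apply relations_rtrans, respects_relations_orthonormal in Hrel. tauto.
  - apply tracial_rtrans; auto.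
Qed.
End Haar.

Theorem mainTheorem10 (n : nat) (Hn : (0 < n)%nat) :
  is_state n (haar n) /\ tracial n (haar n) /\
  (forall phi : functional, is_state n phi -> tracial n phi ->
     feq n (conv n (haar n) phi) (haar n) /\ feq n (conv n phi (haar n)) (haar n)).
Proof.
  split; [|split].
  - split; [apply haar_nil; auto|split; [apply haar_relations; auto|apply haar_positive; auto]].
  - apply haar_tracial; auto.
  - intros phi [H0 [Hrel _]] Htr. split.
    + apply conv_haar_left; auto. apply respects_relations_orthonormal in Hrel; tauto.
    + apply conv_haar_right; auto.
Qed.
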